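(* Let $V$ be a real vector space with a non-degenerate inner product $(\cdot,\cdot)$ of signature $(p,q)$. Decompose $V=V_-\oplus V_+$ as an orthogonal direct sum of a positive definite subspace $V_+$ and its negative definite orthogonal complement $V_-$, let $\varrho_\pm:V\to V_\pm$ be the orthogonal projections, and let $\Phi=\varrho_+-\varrho_-$. Let $A:V\to V$ be self-adjoint with $A^3=0$. Then: \begin{enumerate} \item $\mathrm{Im}(A^2)$ is totally isotropic; \item $\mathrm{rank}(A\Phi A^2)=\mathrm{rank}(A^2\Phi A^2)=\mathrm{rank}(A^2)$, and $A$ restricts to an isomorphism $\mathrm{Im}(A\Phi A^2)\to\mathrm{Im}(A^2)$; \item the restriction of $(\cdot,\cdot)$ to $\mathrm{Im}(A\Phi A^2)$ is non-degenerate; \item $\mathrm{Im}(A^2)$ and $\mathrm{Im}(A\Phi A^2)$ are orthogonal with respect to $(\cdot,\cdot)$. \end{enumerate} *)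

(* A finite-dimensional real vector space V = R^n is modelled
   by column vectors 'cV[R]_n; linear maps are n x n matrices acting on the
   left (x |-> M *m x), so composition agrees with the paper's notation. *)
From HB Require Import structures.
From mathcomp Require Import all_boot all_order all_algebra.
Set Implicit Arguments. Unset Strict Implicit. Unset Printing Implicit Defensive.
Import Order.TTheory GRing.Theory Num.Theory.
Local Open Scope ring_scope.

Section Defs.
Variables (R : realFieldType) (n : nat).

Definition ipG (G : 'M[R]_n) (x y : 'cV[R]_n) : R := (x^T *m G *m y) 0 0.

(* x lies in the image (column space) of the linear map M *)
Definition inIm (x : 'cV[R]_n) (M : 'M[R]_n) : bool := (x^T <= M^T)%MS.

Definition nondeg_form (G : 'M[R]_n) : Prop :=
  forall x : 'cV[R]_n, (forall y, ipG G x y = 0) -> x = 0.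

Definition totally_isotropic (G M : 'M[R]_n) : Prop :=
  forall x y, inIm x M -> inIm y M -> ipG G x y = 0.

Definition nondeg_on (G M : 'M[R]_n) : Prop :=
  forall x, inIm x M -> (forall y, inIm y M -> ipG G x y = 0) -> x = 0.

Definition orthogonal_Im (G M N : 'M[R]_n) : Prop :=
  forall x y, inIm x M -> inIm y N -> ipG G x y = 0.

Definition self_adjoint (G A : 'M[R]_n) : Prop :=
  forall x y, ipG G (A *m x) y = ipG G x (A *m y).

Definition restricts_iso (A M N : 'M[R]_n) : Prop :=
  [/\ (forall x, inIm x M -> inIm (A *m x) N),
      (forall x, inIm x M -> A *m x = 0 -> x = 0) &
      (forall y, inIm y N -> exists2 x, inIm x M & A *m x = y)].

End Defs.

(* Since V_+ and V_- are orthogonal, (u, Phi u) =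
   (rho_+ u, rho_+ u) - (rho_- u, rho_- u), so (u, Phi v) is a positive definite
   twist of the form.  For a self-adjoint B this gives (B v, Phi B v) =
   (v, B Phi B v), hence ker (B Phi B) = ker B; with B = A^2 this yields the rank
   equalities and makes A : Im (A Phi A^2) -> Im A^2 bijective.  If x in
   Im (A Phi A^2) is orthogonal to that image, testing it against A Phi A x gives
   (A x, Phi A x) = 0, so A x = 0 and x = 0.  The orthogonality statements come
   from A^3 = 0 alone: (A^2 u, A w) = (u, A^3 w) = 0. *)
From HB Require Import structures.
From mathcomp Require Import all_boot all_order all_algebra.
Set Implicit Arguments. Unset Strict Implicit. Unset Printing Implicit Defensive.
Import Order.TTheory GRing.Theory Num.Theory.
Local Open Scope ring_scope.

Lemma mxrankM_ker_eq (R : fieldType) m n p (M : 'M[R]_(m, n)) (N : 'M[R]_(n, p)) :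
  (forall v : 'cV_p, M *m N *m v = 0 -> N *m v = 0) -> \rank (M *m N) = \rank N.
Proof.
move=> kerMN; apply/eqP; rewrite eqn_leq mxrankM_maxr /=.
have kerS : (kermx (M *m N)^T <= kermx N^T)%MS.
  apply/row_subP => i; rewrite sub_kermx.
  have /sub_kermxP/(congr1 trmx) := row_sub i (kermx (M *m N)^T).
  rewrite trmx_mul trmxK trmx0 => /kerMN/(congr1 trmx).
  by rewrite trmx_mul trmxK trmx0 => ->.
by move: (mxrankS kerS); rewrite !mxrank_ker !mxrank_tr leq_sub2lE // rank_leq_col.
Qed.

Section Form.
Variables (R : realFieldType) (n : nat) (G : 'M[R]_n).

Lemma inImP (x : 'cV[R]_n) M : reflect (exists v, x = M *m v) (inIm x M).
Proof.
apply: (iffP submxP) => [[D hD]|[v ->]].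
  by exists D^T; rewrite -[x]trmxK hD trmx_mul trmxK.
by exists v^T; rewrite trmx_mul.
Qed.

Lemma inIm_mul M (v : 'cV[R]_n) : inIm (M *m v) M.
Proof. by apply/inImP; exists v. Qed.

Lemma inIm_mulmx_rank M N (y : 'cV[R]_n) :
  \rank (M *m N) = \rank M -> inIm y M -> inIm y (M *m N).
Proof.
move=> rkMN /submx_trans; apply.
have subMN : ((M *m N)^T <= M^T)%MS by rewrite trmx_mul submxMl.
by rewrite -(mxrank_leqif_sup subMN).2 !mxrank_tr rkMN.
Qed.

Lemma ipG_sym x y : G^T = G -> ipG G x y = ipG G y x.
Proof.
move=> Gsym; rewrite /ipG -[in LHS](trmxK (x^T *m G *m y)) mxE.
by rewrite !trmx_mul !trmxK Gsym mulmxA.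
Qed.

Lemma ipG0l y : ipG G 0 y = 0.
Proof. by rewrite /ipG trmx0 !mul0mx mxE. Qed.

Lemma ipG0r x : ipG G x 0 = 0.
Proof. by rewrite /ipG mulmx0 mxE. Qed.

Lemma ipGDl x y z : ipG G (x + y) z = ipG G x z + ipG G y z.
Proof. by rewrite /ipG linearD /= !mulmxDl mxE. Qed.

Lemma ipGBr x y z : ipG G x (y - z) = ipG G x y - ipG G x z.
Proof. by rewrite /ipG mulmxBr !mxE. Qed.

Section Twist.
Variables (Vp Vm rhop rhom : 'M[R]_n).
Hypotheses (Gsym : G^T = G)
  (Vp_pos : forall x, inIm x Vp -> x != 0 -> 0 < ipG G x x)
  (Vm_neg : forall x, inIm x Vm -> x != 0 -> ipG G x x < 0)
  (Vp_perp_Vm : forall x y, inIm x Vp -> inIm y Vm -> ipG G x y = 0)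
  (rhop_Vp : forall x, inIm (rhop *m x) Vp)
  (rhom_Vm : forall x, inIm (rhom *m x) Vm)
  (rhopm : forall x : 'cV[R]_n, rhop *m x + rhom *m x = x).

Lemma ipG_twist_gt0 u : u != 0 -> 0 < ipG G u ((rhop - rhom) *m u).
Proof.
move=> u0; set p := rhop *m u; set m := rhom *m u.
have pm0 : ipG G p m = 0 := Vp_perp_Vm (rhop_Vp u) (rhom_Vm u).
have -> : ipG G u ((rhop - rhom) *m u) = ipG G p p - ipG G m m.
  rewrite -{1}(rhopm u) mulmxBl ipGDl !ipGBr -/p -/m (ipG_sym m p Gsym) pm0.
  by rewrite subr0 add0r.
have [p0|p0] := eqVneq p 0.
  have m0 : m != 0 by apply: contraNneq u0 => m0; rewrite -(rhopm u) -/p -/m p0 m0 addr0.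
  by rewrite p0 ipG0l sub0r oppr_gt0; apply: Vm_neg (rhom_Vm u) m0.
have [m0|m0] := eqVneq m 0; first by rewrite m0 ipG0l subr0; apply: Vp_pos (rhop_Vp u) p0.
by rewrite subr_gt0 (lt_trans (Vm_neg (rhom_Vm u) m0) (Vp_pos (rhop_Vp u) p0)).
Qed.

End Twist.

Section SelfAdjoint.
Variables (Phi A : 'M[R]_n).
Hypotheses (Phi_pos : forall u, u != 0 -> 0 < ipG G u (Phi *m u))
  (A_sa : self_adjoint G A).

Lemma ipG_twist_eq0 u : ipG G u (Phi *m u) = 0 -> u = 0.
Proof. by apply: contra_eq => /Phi_pos/lt0r_neq0. Qed.

Lemma self_adjoint_sqr : self_adjoint G (A *m A).
Proof. by move=> x y; rewrite -mulmxA A_sa A_sa mulmxA. Qed.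

Lemma ker_twist_sandwich B (v : 'cV[R]_n) : self_adjoint G B ->
  B *m Phi *m B *m v = 0 -> B *m v = 0.
Proof.
move=> B_sa BPhiBv0; apply: ipG_twist_eq0.
by rewrite B_sa !mulmxA BPhiBv0 ipG0r.
Qed.

Lemma ker_twist_sqr (v : 'cV[R]_n) : A *m Phi *m (A *m A) *m v = 0 -> A *m A *m v = 0.
Proof.
move=> APhiA2v0; apply: (ker_twist_sandwich self_adjoint_sqr).
have -> : A *m A *m Phi *m (A *m A) *m v = A *m (A *m Phi *m (A *m A) *m v).
  by rewrite !mulmxA.
by rewrite APhiA2v0 mulmx0.
Qed.

Lemma mxrank_sqr_twist_sqr : \rank (A *m A *m Phi *m (A *m A)) = \rank (A *m A).
Proof. by apply: mxrankM_ker_eq => v; apply: ker_twist_sandwich self_adjoint_sqr. Qed.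

Lemma mxrank_twist_sqr : \rank (A *m Phi *m (A *m A)) = \rank (A *m A).
Proof. exact: mxrankM_ker_eq ker_twist_sqr. Qed.

Lemma restricts_iso_twist : restricts_iso A (A *m Phi *m (A *m A)) (A *m A).
Proof.
split.
- move=> _ /inImP [v ->]; apply/inImP; exists (Phi *m (A *m A) *m v).
  by rewrite !mulmxA.
- move=> _ /inImP [v ->] Ax0.
  have A2v0 : A *m A *m v = 0.
    by apply: (ker_twist_sandwich self_adjoint_sqr); rewrite -Ax0 !mulmxA.
  by rewrite -mulmxA A2v0 mulmx0.
- move=> y yA2; have : inIm y (A *m A *m (Phi *m (A *m A))).
    by apply: inIm_mulmx_rank => //; rewrite (mulmxA (A *m A)) mxrank_sqr_twist_sqr.
  case/inImP => v ->; exists (A *m Phi *m (A *m A) *m v); first exact: inIm_mul.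
  by rewrite !mulmxA.
Qed.

Lemma nondeg_on_twist : nondeg_on G (A *m Phi *m (A *m A)).
Proof.
have [_ injA _] := restricts_iso_twist.
move=> x xIm xperp; apply: injA => //; apply: ipG_twist_eq0.
rewrite A_sa; apply: xperp; case/inImP: xIm => v ->.
by apply/inImP; exists (Phi *m (A *m A) *m v); rewrite !mulmxA.
Qed.

Lemma orthogonal_Im_sqr_nil3 M : A *m A *m A = 0 ->
  orthogonal_Im G (A *m A) (A *m M).
Proof.
move=> A3 x y /inImP [u ->] /inImP [w ->].
by rewrite -mulmxA A_sa A_sa !mulmxA A3 !mul0mx ipG0r.
Qed.

End SelfAdjoint.
End Form.

Theorem lemma4p5 (R : realFieldType) (n : nat) (G : 'M[R]_n)
  (Vp Vm rhop rhom A : 'M[R]_n)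
  (* non-degenerate symmetric inner product *)
  (HGsym : G^T = G) (HGnd : nondeg_form G)
  (* V_+ = Im Vp positive definite *)
  (Hpos : forall x, inIm x Vp -> x != 0 -> 0 < ipG G x x)
  (* V_- = Im Vm is the orthogonal complement of V_+ *)
  (Hperp : forall y, inIm y Vm <-> (forall x, inIm x Vp -> ipG G x y = 0))
  (* V_- is negative definite *)
  (Hneg : forall x, inIm x Vm -> x != 0 -> ipG G x x < 0)
  (* rho_+, rho_- are the projections of V = V_- (+) V_+ onto V_+, V_- *)
  (Hrhop : forall x, inIm (rhop *m x) Vp)
  (Hrhom : forall x, inIm (rhom *m x) Vm)
  (Hrho : forall x : 'cV[R]_n, rhop *m x + rhom *m x = x)
  (* A self-adjoint with A^3 = 0 *)
  (HA : self_adjoint G A) (HA3 : A *m A *m A = 0) :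
  let Phi := rhop - rhom in
  let A2 := A *m A in
  [/\ totally_isotropic G A2,
      [/\ \rank (A *m Phi *m A2) = \rank A2,
          \rank (A2 *m Phi *m A2) = \rank A2 &
          restricts_iso A (A *m Phi *m A2) A2],
      nondeg_on G (A *m Phi *m A2) &
      orthogonal_Im G A2 (A *m Phi *m A2)].
Proof.
move=> Phi A2.
have Vp_perp_Vm x y : inIm x Vp -> inIm y Vm -> ipG G x y = 0.
  by move=> xVp /Hperp; apply.
have Phi_pos := ipG_twist_gt0 HGsym Hpos Hneg Vp_perp_Vm Hrhop Hrhom Hrho.
split.
- exact (orthogonal_Im_sqr_nil3 (M := A) HA HA3).
- split; [exact: mxrank_twist_sqr Phi_pos HA | exact: mxrank_sqr_twist_sqr Phi_pos HA |
         exact: restricts_iso_twist Phi_pos HA].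
- exact: nondeg_on_twist Phi_pos HA.
- by rewrite /A2 -mulmxA; apply: (orthogonal_Im_sqr_nil3 HA HA3).
Qed.
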